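(* Consider the following remote estimation problem. Let $a\in\mathbb{R}$ and $x(t+1)=ax(t)+w(t)$, $x(0)=x_0$, where $\{w(t)\}$ are i.i.d. with a symmetric unimodal density with finite second moment. A channel $c(t)\in\{0,1\}$ is a Markov chain with $\mathbb{P}(c(t+1)=1\mid c(t)=0)=p_{01}$, $\mathbb{P}(c(t+1)=1\mid c(t)=1)=p_{11}$, $p_{01},p_{11}\in(0,1)$. The sensor chooses $u(t)\in\{0,1\}$; the estimator receives $y(t)=x(t)$ if $u(t)=1$ and $c(t)=1$, and $y(t)=\Xi$ otherwise. The sensor learns $c(t)$ at time $t+1$ only if $u(t)=1$; $b(t)$ is its conditional probability that $c(t)=1$ (updated as $b(t+1)=p_{11}$ if $u(t)=1,c(t)=1$; $p_{01}$ if $u(t)=1,c(t)=0$; $p_{11}b(t)+p_{01}(1-b(t))$ if $u(t)=0$). Define $v(-1)=x_0$, $v(t)=av(t-1)$ if $y(t)=\Xi$ and $v(t)=y(t)$ otherwise, $e(t)=x(t)-av(t-1)$, $e^+(t)=x(t)-v(t)$. Fix $\lambda>0$, $\beta\in(0,1)$. Problem 1 (restricted form): scheduling strategies $u(t)=\tilde f_t(e(t),b(t),y(0),\dots,y(t-1))$ and estimation strategies $\hat x(t)=\tilde g_t(y(0),\dots,y(t))+v(t)$, with cost $\mathbb{E}\big[\sum_{t\ge0}\beta^t((x(t)-\hat x(t))^2+\lambda u(t))\big]$. Problem 2: a coordination strategy $\ell=(\ell_t)$ maps $y(0),\dots,y(t-1)$ to a prescription $\Gamma_t=\ell_t(y(0),\dots,y(t-1))$,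 a measurable map $\mathbb{R}\times[0,1]\to\{0,1\}$, and the sensor acts as $u(t)=\Gamma_t(e(t),b(t))$; the estimation strategy $\tilde g$ produces $\hat e(t)=\tilde g_t(y(0),\dots,y(t))$; the cost is $\mathbb{E}\big[\sum_{t\ge0}\beta^t((e^+(t)-\hat e(t))^2+\lambda u(t))\big]$. Then for any $(\tilde f,\tilde g)$ in Problem 1 there exists $(\ell,\tilde g)$ in Problem 2 achieving the same expected cost as $(\tilde f,\tilde g)$ in Problem 1; conversely, for any $(\ell,\tilde g)$ in Problem 2 there exists $(\tilde f,\tilde g)$ in Problem 1 achieving the same expected cost as $(\ell,\tilde g)$ in Problem 2.
   Context: All maps are measurable. $\Xi$ is a symbol meaning no packet received. *)

From HB Require Import structures.
From mathcomp Require Import all_boot all_order all_algebra.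
From mathcomp Require Import all_classical all_reals all_analysis.
Unset Printing Implicit Defensive.
Import Order.TTheory GRing.Theory Num.Theory.
Local Open Scope classical_set_scope.
Local Open Scope ring_scope.

(* Observation space: y(t) is encoded as a pair (received?, value).
   y(t) = x(t) is encoded as (true, x(t)); the "no packet" symbol Xi is
   encoded as (false, 0). *)
Definition obs (R : realType) := (bool * R)%type.
Definition Xi {R : realType} : obs R := (false, 0).

Definition hist {R : realType} (yh : nat -> obs R) (t : nat) : t.-tuple (obs R) :=
  mktuple (fun i : 'I_t => yh (nat_of_ord i)).

Fixpoint xs {R : realType} (a x0 : R) (w : nat -> R) (t : nat) : R :=
  match t with 0 => x0 | t'.+1 => a * xs a x0 w t' + w t' end.

(* A generic sensor policy: at time t, given y(0..t-1) and (e(t), b(t)),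
   decide u(t). *)
Definition sensor_pol (R : realType) := forall t : nat, t.-tuple (obs R) -> R * R -> bool.

(* Closed-loop information state at time t: (b(t), v(t-1), history of y). *)
Fixpoint cl_state {R : realType} (a x0 p01 p11 b0 : R) (w : nat -> R) (c : nat -> bool)
    (pol : sensor_pol R) (t : nat) : R * R * (nat -> obs R) :=
  match t with
  | 0 => (b0, x0, fun _ => Xi)
  | t'.+1 =>
    let: (b, vp, yh) := cl_state a x0 p01 p11 b0 w c pol t' in
    let x := xs a x0 w t' in
    let u := pol t' (hist yh t') (x - a * vp, b) in
    let r := u && c t' in
    ((if u then (if c t' then p11 else p01) else p11 * b + p01 * (1 - b)),
     (if r then x else a * vp),
     fun k => if k == t' then (if r then (true, x) else Xi) else yh k)
  end.

Section closed_loop.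
Context {R : realType} (a x0 p01 p11 b0 : R) (w : nat -> R) (c : nat -> bool)
  (pol : sensor_pol R).
Let st t := cl_state a x0 p01 p11 b0 w c pol t.
Definition b_at (t : nat) := (st t).1.1.
Definition vprev_at (t : nat) := (st t).1.2.
Definition e_at (t : nat) := xs a x0 w t - a * vprev_at t.
Definition u_at (t : nat) : bool := pol t (hist (st t).2 t) (e_at t, b_at t).
Definition v_at (t : nat) := vprev_at (t.+1).
Definition eplus_at (t : nat) := xs a x0 w t - v_at t.
Definition yupto (t : nat) : t.+1.-tuple (obs R) := hist (st t.+1).2 t.+1.
End closed_loop.

Definition pol1 {R : realType} (f : forall t, (R * R) * t.-tuple (obs R) -> bool) : sensor_pol R :=
  fun t h eb => f t (eb, h).
Definition pol2 {R : realType} (l : forall t, t.-tuple (obs R) -> (R * R -> bool)) : sensor_pol R :=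
  fun t h eb => l t h eb.

Definition cost1 {R : realType} {d} {Omega : measurableType d} (P : probability Omega R)
  (a x0 p01 p11 b0 lam beta : R) (W : nat -> Omega -> R) (C : nat -> Omega -> bool)
  (f : forall t, (R * R) * t.-tuple (obs R) -> bool)
  (g : forall t, t.+1.-tuple (obs R) -> R) : \bar R :=
  (\int[P]_om \sum_(0 <= t <oo)
     ((beta ^+ t * ((xs a x0 (W^~ om) t
        - (g t (yupto a x0 p01 p11 b0 (W^~ om) (C^~ om) (pol1 f) t)
           + v_at a x0 p01 p11 b0 (W^~ om) (C^~ om) (pol1 f) t)) ^+ 2
        + lam * (u_at a x0 p01 p11 b0 (W^~ om) (C^~ om) (pol1 f) t)%:R))%:E))%E.

Definition cost2 {R : realType} {d} {Omega : measurableType d} (P : probability Omega R)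
  (a x0 p01 p11 b0 lam beta : R) (W : nat -> Omega -> R) (C : nat -> Omega -> bool)
  (l : forall t, t.-tuple (obs R) -> (R * R -> bool))
  (g : forall t, t.+1.-tuple (obs R) -> R) : \bar R :=
  (\int[P]_om \sum_(0 <= t <oo)
     ((beta ^+ t * ((eplus_at a x0 p01 p11 b0 (W^~ om) (C^~ om) (pol2 l) t
        - g t (yupto a x0 p01 p11 b0 (W^~ om) (C^~ om) (pol2 l) t)) ^+ 2
        + lam * (u_at a x0 p01 p11 b0 (W^~ om) (C^~ om) (pol2 l) t)%:R))%:E))%E.

Definition eb_dom (R : realType) : set (R * R) := [set: R] `*` `[0%R, 1%R].

Definition adm1 {R : realType} (f : forall t, (R * R) * t.-tuple (obs R) -> bool) :=
  forall t, measurable_fun (eb_dom R `*` [set: t.-tuple (obs R)]) (f t).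
Definition adm2 {R : realType} (l : forall t, t.-tuple (obs R) -> (R * R -> bool)) :=
  forall t, (forall h, measurable_fun (eb_dom R) (l t h)) /\
    measurable_fun ([set: t.-tuple (obs R)] `*` eb_dom R) (fun z => l t z.1 z.2).
Definition admg {R : realType} (g : forall t, t.+1.-tuple (obs R) -> R) :=
  forall t, measurable_fun [set: t.+1.-tuple (obs R)] (g t).

Definition mutually_independent {R : realType} {d} {Omega : measurableType d}
  (P : probability Omega R) (I : Type) (F : I -> set (set Omega)) :=
  forall n (idx : 'I_n -> I) (E : 'I_n -> set Omega), injective idx ->
    (forall k, F (idx k) (E k)) ->
    P (\bigcap_(k in [set: 'I_n]) E k) = (\prod_(k < n) P (E k))%E.

Definition rv_sigma {d d'} {Omega : measurableType d} {T : measurableType d'}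
  (X : Omega -> T) : set (set Omega) := [set X @^-1` A | A in measurable].
Definition process_sigma {d d'} {Omega : measurableType d} {T : measurableType d'}
  (X : nat -> Omega -> T) : set (set Omega) :=
  <<s \bigcup_(t in [set: nat]) rv_sigma (X t) >>.

(* channel transition probabilities P(c(t+1)=j | c(t)=i) *)
Definition chan_trans {R : realType} (p01 p11 : R) (i j : bool) : R :=
  let p := if i then p11 else p01 in if j then p else 1 - p.

Definition markov_chain {R : realType} {d} {Omega : measurableType d}
  (P : probability Omega R) (C : nat -> Omega -> bool) (p01 p11 : R) :=
  forall (t : nat) (s : nat -> bool),
    P [set om | forall k, (k <= t.+1)%N -> C k om = s k] =
    ((chan_trans p01 p11 (s t) (s t.+1))%:E *
      P [set om | forall k, (k <= t)%N -> C k om = s k])%E.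

From HB Require Import structures.
From mathcomp Require Import all_boot all_order all_algebra.
From mathcomp Require Import all_classical all_reals all_analysis.
Import Order.TTheory GRing.Theory Num.Theory.
Local Open Scope classical_set_scope.
Local Open Scope ring_scope.

(* A Problem-1 scheduler f and the coordination strategy l_t(y) := f_t(., y)
   make the same decision u(t) on every sample path, so both problems run the
   same closed loop; and since x - (ehat + v) = e^+ - ehat, their stage costs
   agree pathwise. *)

Section measurable_fun_product.
Context {d1 d2 d3} {T1 : measurableType d1} {T2 : measurableType d2}
  {T3 : measurableType d3} {A : set T1} {B : set T2} (f : T1 * T2 -> T3).
Hypotheses (mA : measurable A) (mB : measurable B).

Lemma measurable_fun_section y :
  B y -> measurable_fun (A `*` B) f -> measurable_fun A (fun x => f (x, y)).
Proof.
move=> By mf; apply: (measurable_comp (F := A `*` B)) => //.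
- exact: measurableX.
- by move=> _ [x Ax <-].
- exact: measurable_funS (pair2_measurable y).
Qed.

Lemma measurable_fun_swap :
  measurable_fun (A `*` B) f -> measurable_fun (B `*` A) (f \o @swap_pair _ _).
Proof.
move=> mf; apply: (measurable_comp (F := A `*` B)) => //.
- exact: measurableX.
- by move=> _ [[y x] [By Ax] <-].
- by apply: (measurable_funS measurableT) => //; exact: measurable_swap.
Qed.

End measurable_fun_product.

Lemma measurable_eb_dom (R : realType) : measurable (eb_dom R).
Proof. by apply: measurableX => //; exact: measurable_itv. Qed.

Section same_closed_loop.
Context {R : realType} {d} {Omega : measurableType d} {P : probability Omega R}
  {a x0 p01 p11 b0 lam beta : R} {W : nat -> Omega -> R}
  {C : nat -> Omega -> bool} {g : forall t, t.+1.-tuple (obs R) -> R}.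

Lemma cost2_eq_cost1 (f : forall t, (R * R) * t.-tuple (obs R) -> bool)
    (l : forall t, t.-tuple (obs R) -> (R * R -> bool)) :
  pol2 l = pol1 f ->
  cost2 P a x0 p01 p11 b0 lam beta W C l g =
  cost1 P a x0 p01 p11 b0 lam beta W C f g.
Proof.
move=> same_pol; rewrite /cost1 /cost2 same_pol.
apply: eq_integral => om _; apply: eq_eseriesr => t _.
by rewrite /eplus_at opprD addrA addrAC.
Qed.

End same_closed_loop.

Theorem lemma3 (R : realType) (d : measure_display) (Omega : measurableType d)
  (P : probability Omega R)
  (a x0 p01 p11 lam beta : R)
  (W : nat -> Omega -> R) (C : nat -> Omega -> bool) (fw : R -> R)
  (hp01 : 0 < p01 < 1) (hp11 : 0 < p11 < 1)
  (hlam : 0 < lam) (hbeta : 0 < beta < 1)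
  (* noise: i.i.d. with a symmetric unimodal density fw with finite second moment *)
  (hWmeas : forall t, measurable_fun [set: Omega] (W t))
  (hfw_meas : measurable_fun [set: R] fw)
  (hfw_ge0 : forall x, 0 <= fw x)
  (hdens : forall t (A : set R), measurable A ->
     P (W t @^-1` A) = (\int[lebesgue_measure]_(x in A) (fw x)%:E)%E)
  (hfw_sym : forall x, fw (- x) = fw x)
  (hfw_unimodal : forall x y, 0 <= x -> x <= y -> fw y <= fw x)
  (hfw_2nd : (\int[lebesgue_measure]_x ((x ^+ 2 * fw x)%:E) < +oo)%E)
  (* channel: Markov chain with the given transition probabilities *)
  (hCmeas : forall t, measurable_fun [set: Omega] (C t))
  (hC : markov_chain P C p01 p11)
  (* noises and channel process mutually independent *)
  (hindep : mutually_independent P (option nat)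
     (fun i : option nat => match i with
                            | None => process_sigma C
                            | Some t => rv_sigma (W t) end)) :
  let b0 := fine (P (C 0%N @^-1` [set true])) in
  (forall (f : forall t, (R * R) * t.-tuple (obs R) -> bool)
          (g : forall t, t.+1.-tuple (obs R) -> R),
      adm1 f -> admg g ->
      exists l : forall t, t.-tuple (obs R) -> (R * R -> bool),
        adm2 l /\
        cost2 P a x0 p01 p11 b0 lam beta W C l g =
        cost1 P a x0 p01 p11 b0 lam beta W C f g) /\
  (forall (l : forall t, t.-tuple (obs R) -> (R * R -> bool))
          (g : forall t, t.+1.-tuple (obs R) -> R),
      adm2 l -> admg g ->
      exists f : forall t, (R * R) * t.-tuple (obs R) -> bool,
        adm1 f /\
        cost1 P a x0 p01 p11 b0 lam beta W C f g =
        cost2 P a x0 p01 p11 b0 lam beta W C l g).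
Proof.
move=> b0; have meb := measurable_eb_dom R.
split=> [f g mf _ | l g ml _].
- exists (fun t h eb => f t (eb, h)); split; last exact: cost2_eq_cost1 f _ erefl.
  move=> t; split=> [h|].
  + exact: (measurable_fun_section (f t) meb measurableT h I (mf t)).
  + exact: (measurable_fun_swap (f t) meb measurableT (mf t)).
- pose f t (z : (R * R) * t.-tuple (obs R)) := l t z.2 z.1.
  exists f; split; last exact: esym (cost2_eq_cost1 f l erefl).
  move=> t; exact: (measurable_fun_swap _ measurableT meb (ml t).2).
Qed.
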